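(* Let $f:\mathbb R^{n+m}\to\mathbb R$ be convex with $g(x)=\inf_y f(x,y)$ finite for every $x$. Let $H_1:\mathbb R^n\to\mathbb R^n$ be the single-valued inverse of $x\mapsto x+\nabla_xg$ and $H:\mathbb R^{n+m}\to\mathbb R^{n+m}$ the single-valued inverse of $(x,y)\mapsto (x,y)+\nabla_{(x,y)}f$, and define $J(x,u,y) = y - \pi_2 H(H_1(x+u)+u,y)$ for $(x,u,y)\in\mathbb R^n\times\mathbb R^n\times\mathbb R^m$, with $\pi_2:\mathbb R^{n+m}\to\mathbb R^m$ the second projection. Then $J$ is Lipschitz in $(x,u,y)$. Moreover, if $(x,y)\mapsto f(x,y) - \frac{\sigma}{2}\|y\|^2$ is convex for some $\sigma>0$, then there is $\lambda>0$ such that for all $x,u\in\mathbb R^n$ and $y_1,y_2\in\mathbb R^m$, $\|J(x,u,y_1) - J(x,u,y_2)\| \ge \lambda \|y_1-y_2\|$.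
   Context: For $h:\mathbb R^k\to\mathbb R$ and $z_0\in\mathbb R^k$, $\nabla_{z_0}h=\{u\in\mathbb R^k: h(z)-h(z_0)\ge u\cdot(z-z_0)\text{ for all } z \text{ sufficiently near } z_0\}$. ''Inverse'' means $H_1(u)=x\iff u\in x+\nabla_xg$ and $H(u,v)=(x,y)\iff (u,v)\in(x,y)+\nabla_{(x,y)}f$; such single-valued inverses exist for convex $g$, $f$. *)

From HB Require Import structures.
From mathcomp Require Import all_boot all_order all_algebra.
From mathcomp Require Import all_classical all_reals.
Set Implicit Arguments. Unset Strict Implicit. Unset Printing Implicit Defensive.
Import Order.TTheory GRing.Theory Num.Theory.
Local Open Scope ring_scope.
Local Open Scope classical_set_scope.

Definition dotv (R : realType) (k : nat) (u v : 'rV[R]_k) : R :=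
  \sum_(i < k) u ord0 i * v ord0 i.
Definition enorm (R : realType) (k : nat) (v : 'rV[R]_k) : R :=
  Num.sqrt (dotv v v).

Definition convex_fun (R : realType) (k : nat) (h : 'rV[R]_k -> R) : Prop :=
  forall (a b : 'rV[R]_k) (t : R), 0 <= t <= 1 ->
    h ((1 - t) *: a + t *: b) <= (1 - t) * h a + t * h b.

Definition subdiff (R : realType) (k : nat) (h : 'rV[R]_k -> R) (z0 : 'rV[R]_k)
  : set 'rV[R]_k :=
  [set u | exists2 d : R, 0 < d &
     forall z, enorm (z - z0) < d -> dotv u (z - z0) <= h z - h z0].

Definition marg (R : realType) (n m : nat) (f : 'rV[R]_(n + m) -> R)
  (x : 'rV[R]_n) : R := inf (range (fun y : 'rV[R]_m => f (row_mx x y))).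

Definition Jmap (R : realType) (n m : nat) (H1 : 'rV[R]_n -> 'rV[R]_n)
  (H : 'rV[R]_(n + m) -> 'rV[R]_(n + m)) (x u : 'rV[R]_n) (y : 'rV[R]_m)
  : 'rV[R]_m := y - rsubmx (H (row_mx (H1 (x + u) + u) y)).

Definition enorm3 (R : realType) (n m : nat) (x u : 'rV[R]_n) (y : 'rV[R]_m) : R :=
  Num.sqrt (enorm x ^+ 2 + enorm u ^+ 2 + enorm y ^+ 2).

From HB Require Import structures.
From mathcomp Require Import all_boot all_order all_algebra.
From mathcomp Require Import all_classical all_reals.
From mathcomp Require Import ring lra.
Import Order.TTheory GRing.Theory Num.Theory.
Local Open Scope ring_scope.
Local Open Scope classical_set_scope.

(* H1 and H are the resolvents (I + \nabla g)^-1 and (I + \nabla f)^-1, and g is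
   convex as the marginal of the convex f.  A local subgradient of a convex
   function satisfies the subgradient inequality globally: test it at a point of
   the segment close to the base point and use convexity along the segment.  Hence
   subdifferentials are monotone and resolvents are nonexpansive, and J, built from
   them by sums and projections, is Lipschitz.  If f is sigma-strongly convex in y,
   the subdifferential is strongly monotone in the y-direction, so the y-component
   of H moves by at most 2/(sigma+2) times a y-perturbation of its argument; hence
   J(x,u,.) expands distances by at least sigma/(sigma+2). *)


Section EuclideanSpace.
Set Implicit Arguments. Unset Strict Implicit.
Context {R : realType}.

Lemma dotvC {k} (u v : 'rV[R]_k) : dotv u v = dotv v u.
Proof. by apply: eq_bigr => i _; rewrite mulrC. Qed.

Lemma dotvDl {k} (u v w : 'rV[R]_k) : dotv (u + v) w = dotv u w + dotv v w.
Proof. by rewrite /dotv -big_split; apply: eq_bigr => i _; rewrite !mxE mulrDl. Qed.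

Lemma dotvDr {k} (u v w : 'rV[R]_k) : dotv w (u + v) = dotv w u + dotv w v.
Proof. by rewrite dotvC dotvDl !(dotvC w). Qed.

Lemma dotvZl {k} a (u w : 'rV[R]_k) : dotv (a *: u) w = a * dotv u w.
Proof. by rewrite /dotv mulr_sumr; apply: eq_bigr => i _; rewrite !mxE mulrA. Qed.

Lemma dotvZr {k} a (u w : 'rV[R]_k) : dotv w (a *: u) = a * dotv w u.
Proof. by rewrite dotvC dotvZl dotvC. Qed.

Lemma dotvNl {k} (u w : 'rV[R]_k) : dotv (- u) w = - dotv u w.
Proof. by rewrite -scaleN1r dotvZl mulN1r. Qed.

Lemma dotvNr {k} (u w : 'rV[R]_k) : dotv w (- u) = - dotv w u.
Proof. by rewrite dotvC dotvNl dotvC. Qed.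

Lemma dotvBl {k} (u v w : 'rV[R]_k) : dotv (u - v) w = dotv u w - dotv v w.
Proof. by rewrite dotvDl dotvNl. Qed.

Lemma dotvBr {k} (u v w : 'rV[R]_k) : dotv w (u - v) = dotv w u - dotv w v.
Proof. by rewrite dotvDr dotvNr. Qed.

Lemma dotv0l {k} (w : 'rV[R]_k) : dotv 0 w = 0.
Proof. by rewrite -(scale0r (0 : 'rV[R]_k)) dotvZl mul0r. Qed.

Lemma dotv0r {k} (w : 'rV[R]_k) : dotv w 0 = 0.
Proof. by rewrite dotvC dotv0l. Qed.

Lemma dotv_row_mx {p q} (a c : 'rV[R]_p) (b d : 'rV[R]_q) :
  dotv (row_mx a b) (row_mx c d) = dotv a c + dotv b d.
Proof.
rewrite /dotv big_split_ord /=.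
by congr (_ + _); apply: eq_bigr => i _; rewrite ?row_mxEl ?row_mxEr.
Qed.

Lemma dotvv_ge0 {k} (u : 'rV[R]_k) : 0 <= dotv u u.
Proof. by apply: sumr_ge0 => i _; rewrite -expr2 sqr_ge0. Qed.

Lemma dotvv_eq0 {k} (u : 'rV[R]_k) : (dotv u u == 0) = (u == 0).
Proof.
apply/idP/eqP => [|->]; last by rewrite dotv0l.
rewrite psumr_eq0 => [/allP u0|i _]; last by rewrite -expr2 sqr_ge0.
apply/matrixP => i j; rewrite mxE (ord1 i).
by have /= := u0 j (mem_index_enum _); rewrite mulf_eq0 orbb => /eqP.
Qed.

Lemma enorm_ge0 {k} (u : 'rV[R]_k) : 0 <= enorm u.
Proof. exact: sqrtr_ge0. Qed.

Lemma enorm_sqr {k} (u : 'rV[R]_k) : enorm u ^+ 2 = dotv u u.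
Proof. by rewrite sqr_sqrtr // dotvv_ge0. Qed.

Lemma enormN {k} (u : 'rV[R]_k) : enorm (- u) = enorm u.
Proof. by rewrite /enorm dotvNl dotvNr opprK. Qed.

Lemma enormZ {k} t (u : 'rV[R]_k) : 0 <= t -> enorm (t *: u) = t * enorm u.
Proof.
move=> t0; rewrite /enorm dotvZl dotvZr mulrA -expr2.
by rewrite sqrtrM ?sqr_ge0 // sqrtr_sqr ger0_norm.
Qed.

(* Cauchy-Schwarz, from the nonnegativity of the square norm of (v.v) u - (u.v) v. *)
Lemma dotv_le_enorm {k} (u v : 'rV[R]_k) : dotv u v <= enorm u * enorm v.
Proof.
have [->|v0] := eqVneq v 0; first by rewrite dotv0r /enorm dotv0r sqrtr0 mulr0.
have vv0 : 0 < dotv v v by rewrite lt_neqAle eq_sym dotvv_eq0 v0 dotvv_ge0.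
have uv_sqr : dotv u v ^+ 2 <= dotv u u * dotv v v.
  have := dotvv_ge0 (dotv v v *: u - dotv u v *: v).
  rewrite !(dotvBl, dotvBr, dotvZl, dotvZr) (dotvC v u) expr2; nra.
apply: (le_trans (ler_norm _)).
by rewrite -sqrtr_sqr /enorm -sqrtrM ?dotvv_ge0 // ler_sqrt // mulr_ge0 ?dotvv_ge0.
Qed.

Lemma enormD_le {k} (u v : 'rV[R]_k) : enorm (u + v) <= enorm u + enorm v.
Proof.
rewrite -ler_sqr ?nnegrE ?addr_ge0 ?enorm_ge0 //.
rewrite enorm_sqr !(dotvDl, dotvDr) (dotvC v u) sqrrD !enorm_sqr.
by have := dotv_le_enorm u v; lra.
Qed.

Lemma enormB_ge {k} (u v : 'rV[R]_k) : enorm u - enorm v <= enorm (u - v).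
Proof. by have := enormD_le (u - v) v; rewrite subrK; lra. Qed.

Lemma enorm_rsubmx_le {p q} (z : 'rV[R]_(p + q)) : enorm (rsubmx z) <= enorm z.
Proof.
rewrite -ler_sqr ?nnegrE ?enorm_ge0 // !enorm_sqr -[X in _ <= dotv X _](hsubmxK z).
rewrite -[X in _ <= dotv _ X](hsubmxK z) dotv_row_mx.
by rewrite lerDr dotvv_ge0.
Qed.

Lemma enorm_row_mx_le {p q} (a : 'rV[R]_p) (b : 'rV[R]_q) :
  enorm (row_mx a b) <= enorm a + enorm b.
Proof.
have -> : row_mx a b = row_mx a 0 + row_mx 0 b by rewrite add_row_mx addr0 add0r.
apply: (le_trans (enormD_le _ _)).
by rewrite /enorm !dotv_row_mx !dotv0l addr0 add0r.
Qed.

Lemma enorm_le_enorm3 {p q} (x u : 'rV[R]_p) (y : 'rV[R]_q) :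
  [/\ enorm x <= enorm3 x u y, enorm u <= enorm3 x u y & enorm y <= enorm3 x u y].
Proof.
have sx := sqr_ge0 (enorm x); have su := sqr_ge0 (enorm u); have sy := sqr_ge0 (enorm y).
have e3_sqr : enorm3 x u y ^+ 2 = enorm x ^+ 2 + enorm u ^+ 2 + enorm y ^+ 2.
  by rewrite sqr_sqrtr // !addr_ge0.
by split; rewrite -ler_sqr ?nnegrE ?enorm_ge0 ?sqrtr_ge0 // e3_sqr; lra.
Qed.

Lemma enorm_convex_comb_sqr {k} (t : R) (p1 p2 : 'rV[R]_k) :
  enorm ((1 - t) *: p1 + t *: p2) ^+ 2
  = (1 - t) * enorm p1 ^+ 2 + t * enorm p2 ^+ 2 - t * (1 - t) * enorm (p2 - p1) ^+ 2.
Proof.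
by rewrite !enorm_sqr !(dotvDl, dotvDr, dotvNl, dotvNr, dotvZl, dotvZr) (dotvC p2 p1); ring.
Qed.

End EuclideanSpace.

Section Convexity.
Set Implicit Arguments. Unset Strict Implicit.
Context {R : realType}.

Lemma marg_convex {n m} (f : 'rV[R]_(n + m) -> R) : convex_fun f ->
  (forall x : 'rV[R]_n, has_lbound (range (fun y : 'rV[R]_m => f (row_mx x y)))) ->
  convex_fun (marg f).
Proof.
move=> f_cvx f_lb a b t /andP[t0 t1]; apply/ler_addgt0Pr => e e0.
have fiber_n0 x : range (fun y : 'rV[R]_m => f (row_mx x y)) !=set0.
  by exists (f (row_mx x 0)); exists 0.
have marg_lt x : marg f x < marg f x + e by rewrite ltrDl.
have [_ [ya _ <-] ya_e] := inf_lt (fiber_n0 a) (marg_lt a).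
have [_ [yb _ <-] yb_e] := inf_lt (fiber_n0 b) (marg_lt b).
have marg_le : marg f ((1 - t) *: a + t *: b)
    <= f ((1 - t) *: row_mx a ya + t *: row_mx b yb).
  rewrite !scale_row_mx add_row_mx.
  by apply: (ge_inf (f_lb _)); exists ((1 - t) *: ya + t *: yb).
have := f_cvx (row_mx a ya) (row_mx b yb) t; rewrite t0 t1 => /(_ isT) cvx.
have ea : (1 - t) * f (row_mx a ya) <= (1 - t) * (marg f a + e).
  by rewrite ler_wpM2l ?subr_ge0 // ltW.
have eb : t * f (row_mx b yb) <= t * (marg f b + e) by rewrite ler_wpM2l // ltW.
have := le_trans marg_le cvx; move: ea eb; rewrite /marg; lra.
Qed.

Lemma strongly_convex_segment {k p} (h : 'rV[R]_k -> R)
    (P : {linear 'rV[R]_k -> 'rV[R]_p}) (s t : R) (z1 z2 : 'rV[R]_k) :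
  convex_fun (fun z => h z - s / 2 * enorm (P z) ^+ 2) -> 0 <= t <= 1 ->
  h ((1 - t) *: z1 + t *: z2) - h z1
  <= t * (h z2 - h z1 - s / 2 * (1 - t) * enorm (P (z2 - z1)) ^+ 2).
Proof.
move=> h_cvx t01; have := h_cvx z1 z2 t t01.
rewrite /= linearD !linearZ enorm_convex_comb_sqr linearB.
set q1 := enorm (P z1) ^+ 2; set q2 := enorm (P z2) ^+ 2.
set q := enorm (P z2 - P z1) ^+ 2.
have -> : t * (h z2 - h z1 - s / 2 * (1 - t) * q)
  = (1 - t) * (h z1 - s / 2 * q1) + t * (h z2 - s / 2 * q2) - h z1
    + s / 2 * ((1 - t) * q1 + t * q2 - t * (1 - t) * q) by ring.
lra.
Qed.

Lemma subdiff_strongly_convex_le {k p} (h : 'rV[R]_k -> R)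
    (P : {linear 'rV[R]_k -> 'rV[R]_p}) (s : R) (z1 z2 a : 'rV[R]_k) :
  0 <= s -> convex_fun (fun z => h z - s / 2 * enorm (P z) ^+ 2) ->
  subdiff h z1 a ->
  dotv a (z2 - z1) <= h z2 - h z1 - s / 4 * enorm (P (z2 - z1)) ^+ 2.
Proof.
move=> s0 h_cvx [d d0 a_loc]; set N := enorm (z2 - z1).
have N0 : 0 <= N by apply: enorm_ge0.
(* t is small enough for z1 + t (z2 - z1) to lie in the ball where a is a
   subgradient, and t <= 1/2 gives s/2 (1 - t) >= s/4. *)
set t := d / (2 * N + 2 * d).
have den0 : 0 < 2 * N + 2 * d by lra.
have t0 : 0 < t by rewrite divr_gt0.
have t_half : t <= 1 / 2 by rewrite ler_pdivrMr // mulrC mulrA; lra.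
have tN : t * N < d by rewrite mulrAC ltr_pdivrMr //; nra.
have zt_z1 : (1 - t) *: z1 + t *: z2 - z1 = t *: (z2 - z1).
  by apply/matrixP => i j; rewrite !mxE; ring.
have := a_loc ((1 - t) *: z1 + t *: z2).
rewrite zt_z1 (enormZ _ (ltW t0)) dotvZr => /(_ tN) loc.
have t01 : 0 <= t <= 1 by apply/andP; split; lra.
have /(le_trans loc) := strongly_convex_segment z1 z2 h_cvx t01.
rewrite ler_pM2l // => /le_trans; apply.
by rewrite lerD2l lerN2 ler_wpM2r ?sqr_ge0 //; nra.
Qed.

Lemma subdiff_strongly_monotone {k p} (h : 'rV[R]_k -> R)
    (P : {linear 'rV[R]_k -> 'rV[R]_p}) (s : R) (z1 z2 a1 a2 : 'rV[R]_k) :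
  0 <= s -> convex_fun (fun z => h z - s / 2 * enorm (P z) ^+ 2) ->
  subdiff h z1 a1 -> subdiff h z2 a2 ->
  s / 2 * enorm (P (z1 - z2)) ^+ 2 <= dotv (a1 - a2) (z1 - z2).
Proof.
move=> s0 h_cvx a1z1 a2z2.
have := subdiff_strongly_convex_le z2 s0 h_cvx a1z1.
have := subdiff_strongly_convex_le z1 s0 h_cvx a2z2.
rewrite -(opprB z1 z2) linearN enormN dotvNr dotvBl; lra.
Qed.

Lemma subdiff_monotone {k} (h : 'rV[R]_k -> R) (z1 z2 a1 a2 : 'rV[R]_k) :
  convex_fun h -> subdiff h z1 a1 -> subdiff h z2 a2 ->
  0 <= dotv (a1 - a2) (z1 - z2).
Proof.
move=> h_cvx a1z1 a2z2.
have h_cvx0 : convex_fun (fun z => h z - 0 / 2 * enorm (idfun z) ^+ 2).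
  by move=> z w t t01; rewrite !mul0r !subr0; apply: h_cvx.
by have := subdiff_strongly_monotone (lexx 0) h_cvx0 a1z1 a2z2; rewrite !mul0r.
Qed.

Lemma resolvent_nonexpansive {k} (h : 'rV[R]_k -> R) (T : 'rV[R]_k -> 'rV[R]_k) :
  convex_fun h -> (forall w, subdiff h (T w) (w - T w)) ->
  forall w1 w2, enorm (T w1 - T w2) <= enorm (w1 - w2).
Proof.
move=> h_cvx T_res w1 w2.
have := subdiff_monotone h_cvx (T_res w1) (T_res w2).
have -> : w1 - T w1 - (w2 - T w2) = (w1 - w2) - (T w1 - T w2).
  by apply/matrixP => i j; rewrite !mxE; ring.
rewrite dotvBl -enorm_sqr => firm.
have := dotv_le_enorm (w1 - w2) (T w1 - T w2).
have := enorm_ge0 (w1 - w2); have := enorm_ge0 (T w1 - T w2).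
rewrite expr2 in firm; nra.
Qed.

End Convexity.

Section Jmap.
Context {R : realType} {n m : nat}.
Variables (H1 : 'rV[R]_n -> 'rV[R]_n) (H : 'rV[R]_(n + m) -> 'rV[R]_(n + m)).

Lemma Jmap_lipschitz :
  (forall u v, enorm (H1 u - H1 v) <= enorm (u - v)) ->
  (forall w z, enorm (H w - H z) <= enorm (w - z)) ->
  forall (x1 u1 x2 u2 : 'rV[R]_n) (y1 y2 : 'rV[R]_m),
    enorm (Jmap H1 H x1 u1 y1 - Jmap H1 H x2 u2 y2)
      <= 5 * enorm3 (x1 - x2) (u1 - u2) (y1 - y2).
Proof.
move=> H1_nexp H_nexp x1 u1 x2 u2 y1 y2.
have [ex eu ey] := enorm_le_enorm3 (x1 - x2) (u1 - u2) (y1 - y2).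
set w1 := row_mx (H1 (x1 + u1) + u1) y1; set w2 := row_mx (H1 (x2 + u2) + u2) y2.
have dJ : Jmap H1 H x1 u1 y1 - Jmap H1 H x2 u2 y2 = (y1 - y2) - rsubmx (H w1 - H w2).
  by apply/matrixP => i j; rewrite !mxE; ring.
have dw : w1 - w2 = row_mx ((H1 (x1 + u1) - H1 (x2 + u2)) + (u1 - u2)) (y1 - y2).
  by rewrite opp_row_mx add_row_mx; congr row_mx; apply/matrixP => i j; rewrite !mxE; ring.
have dxu : x1 + u1 - (x2 + u2) = (x1 - x2) + (u1 - u2).
  by apply/matrixP => i j; rewrite !mxE; ring.
have J_le := enormD_le (y1 - y2) (- rsubmx (H w1 - H w2)).
have Hw_le := le_trans (enorm_rsubmx_le (H w1 - H w2)) (H_nexp w1 w2).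
have w_le := enorm_row_mx_le (H1 (x1 + u1) - H1 (x2 + u2) + (u1 - u2)) (y1 - y2).
have H1_le := enormD_le (H1 (x1 + u1) - H1 (x2 + u2)) (u1 - u2).
have := H1_nexp (x1 + u1) (x2 + u2); rewrite dxu => H1_nexp'.
have := enormD_le (x1 - x2) (u1 - u2).
(* |dJ| <= |dy| + |dw| <= |dx| + 2 |du| + 2 |dy| *)
move: J_le Hw_le; rewrite dJ dw enormN; lra.
Qed.

Lemma Jmap_expansive_in_y (sigma : R) : 0 < sigma ->
  (forall w z, sigma / 2 * enorm (rsubmx (H w - H z)) ^+ 2
                 <= dotv ((w - H w) - (z - H z)) (H w - H z)) ->
  forall (x u : 'rV[R]_n) (y1 y2 : 'rV[R]_m),
    sigma / (sigma + 2) * enorm (y1 - y2)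
      <= enorm (Jmap H1 H x u y1 - Jmap H1 H x u y2).
Proof.
move=> sigma0 H_mono x u y1 y2.
set w1 := row_mx (H1 (x + u) + u) y1; set w2 := row_mx (H1 (x + u) + u) y2.
set dz := H w1 - H w2; set e := rsubmx dz; set Y := y1 - y2.
have dJ : Jmap H1 H x u y1 - Jmap H1 H x u y2 = Y - e.
  by apply/matrixP => i j; rewrite !mxE; ring.
have dw : w1 - H w1 - (w2 - H w2) = row_mx 0 Y - dz.
  have -> : row_mx 0 Y = w1 - w2 by rewrite opp_row_mx add_row_mx subrr.
  by apply/matrixP => i j; rewrite !mxE; ring.
have := H_mono w1 w2; rewrite dw -/dz dotvBl -[in dotv _ dz](hsubmxK dz).
rewrite -[in dotv dz _](hsubmxK dz) !dotv_row_mx dotv0l add0r -/e.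
have := dotvv_ge0 (lsubmx dz); rewrite -!enorm_sqr => l_ge0 mono_e.
have e_ge0 := enorm_ge0 e; have Y_ge0 := enorm_ge0 Y.
have cs := dotv_le_enorm Y e.
(* mono_e and Cauchy-Schwarz give (sigma/2 + 1) |e|^2 <= |Y| |e|. *)
have e_contr : (sigma + 2) * enorm e <= 2 * enorm Y.
  have [//|lt] := lerP ((sigma + 2) * enorm e) (2 * enorm Y).
  rewrite expr2 in mono_e; nra.
rewrite dJ mulrAC ler_pdivrMr; last lra.
have := enormB_ge Y e; nra.
Qed.

End Jmap.

Theorem lemma2p14 (R : realType) (n m : nat) (f : 'rV[R]_(n + m) -> R)
  (H1 : 'rV[R]_n -> 'rV[R]_n) (H : 'rV[R]_(n + m) -> 'rV[R]_(n + m)) :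
  convex_fun f ->
  (forall x : 'rV[R]_n, has_lbound (range (fun y : 'rV[R]_m => f (row_mx x y)))) ->
  (forall u x : 'rV[R]_n, H1 u = x <-> subdiff (marg f) x (u - x)) ->
  (forall w z : 'rV[R]_(n + m), H w = z <-> subdiff f z (w - z)) ->
  (exists L : R, forall (x1 u1 x2 u2 : 'rV[R]_n) (y1 y2 : 'rV[R]_m),
      enorm (Jmap H1 H x1 u1 y1 - Jmap H1 H x2 u2 y2)
        <= L * enorm3 (x1 - x2) (u1 - u2) (y1 - y2)) /\
  ((exists sigma : R, 0 < sigma /\
      convex_fun (fun z : 'rV[R]_(n + m) =>
        f z - sigma / 2 * enorm (rsubmx z) ^+ 2)) ->
   exists2 lambda : R, 0 < lambda &
     forall (x u : 'rV[R]_n) (y1 y2 : 'rV[R]_m),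
       enorm (Jmap H1 H x u y1 - Jmap H1 H x u y2) >= lambda * enorm (y1 - y2)).
Proof.
move=> f_cvx f_lb H1_res H_res.
have H1_sub u : subdiff (marg f) (H1 u) (u - H1 u) by apply/H1_res.
have H_sub w : subdiff f (H w) (w - H w) by apply/H_res.
split.
  exists 5; apply: Jmap_lipschitz.
  - exact: resolvent_nonexpansive (marg_convex f_cvx f_lb) H1_sub.
  - exact: resolvent_nonexpansive f_cvx H_sub.
move=> [sigma [sigma0 f_scvx]].
exists (sigma / (sigma + 2)); first by rewrite divr_gt0 ?addr_gt0.
apply: Jmap_expansive_in_y => // w z.
exact: subdiff_strongly_monotone (ltW sigma0) f_scvx _ _.
Qed.
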